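(* Let $\mathfrak A$ be a commutative ring and let $(a_i),(a^*_i),(b_i),(b^*_i)$, $i\in\mathbb Z$, be sequences in $\mathfrak A$ with $a_0=a^*_0=b_0=b^*_0=1$ and $a_i=a^*_i=b_i=b^*_i=0$ for $i<0$, such that $\big(\sum_{i\ge0}a_it^i\big)\big(\sum_{i\ge0}b_it^i\big)=1$ and $\big(\sum_{i\ge0}a^*_it^i\big)\big(\sum_{i\ge0}b^*_it^i\big)=1$ as formal power series. Let $\nu,\mu$ be partitions, $q=\ell(\nu)$, $p=\ell(\mu)$, $s=\ell(\nu')$, $r=\ell(\mu')$ ($'$ denoting conjugation). Let $A$ be the $(p+q)\times(p+q)$ matrix with $A_{ij}=a^*_{\nu_{q+1-i}+i-j}$ for $1\le i\le q$ and $A_{q+i,j}=a_{\mu_i-q-i+j}$ for $1\le i\le p$, and $B$ the $(r+s)\times(r+s)$ matrix with $B_{ij}=b^*_{\nu'_{s+1-i}+i-j}$ for $1\le i\le s$ and $B_{s+i,j}=b_{\mu'_i-s-i+j}$ for $1\le i\le r$. Then $\det A=(-1)^{|\nu|+|\mu|}\det B$.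
   Context: $\ell(\lambda)$ is the number of nonzero parts of a partition $\lambda$ and $|\lambda|$ its size. Explicitly, the rows of $A$ are $(a^*_{\nu_q},a^*_{\nu_q-1},\dots,a^*_{\nu_q-q-p+1}),\dots,(a^*_{\nu_1+q-1},\dots,a^*_{\nu_1-p}),(a_{\mu_1-q},\dots,a_{\mu_1+p-1}),\dots,(a_{\mu_p-q-p+1},\dots,a_{\mu_p})$, and $B$ is analogous with $b^*,b,\nu',\mu',s,r$. *)

From HB Require Import structures.
From mathcomp Require Import all_boot all_order all_algebra.
Set Implicit Arguments. Unset Strict Implicit. Unset Printing Implicit Defensive.
Import Order.TTheory GRing.Theory Num.Theory.
Local Open Scope ring_scope.

Definition is_partition (la : seq nat) : bool :=
  sorted geq la && all (fun x => 0 < x)%N la.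

Definition conj_part (la : seq nat) : seq nat :=
  mkseq (fun j => count (fun x => j < x)%N la) (foldr maxn 0%N la).

(* 1-based part la_i (i >= 1) is  nth 0 la (i-1). *)

Definition series_inverse (R : comPzRingType) (a b : int -> R) : Prop :=
  forall n : nat, \sum_(k < n.+1) a (k%:Z) * b ((n - k)%:Z) = (n == 0%N)%:R.

Definition normalized_seq (R : comPzRingType) (a : int -> R) : Prop :=
  a 0 = 1 /\ forall i : int, i < 0 -> a i = 0.

(* The (q+p) x (q+p) matrix, q = size nu, p = size mu, 0-based indices:
   row i < q     : A_{i,j} = astar_{ nu_{q-i} + i - j }      (1-based nu)
   row q + i'    : A_{q+i',j} = a_{ mu_{i'+1} - q - i' + j }  (1-based mu) *)
Definition jt_matrix (R : comPzRingType) (astar a : int -> R) (nu mu : seq nat)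
  : 'M[R]_(size nu + size mu) :=
  \matrix_(i, j)
    if (i < size nu)%N
    then astar ((nth 0%N nu (size nu - 1 - i))%:Z + i%:Z - j%:Z)
    else a ((nth 0%N mu (i - size nu))%:Z - (size nu)%:Z - (i - size nu)%:Z + j%:Z).

(* Jacobi's theorem on complementary minors, in block form: if X Y = 1 then the
   top-left minor of X is det X times the complementary bottom-right minor of Y.
   Up to permutations of rows and columns and a unipotent column operation, X is
   the block-diagonal matrix D = diag(T(astar), T(a)) of lower-triangular Toeplitz
   matrices, so Y is built in the same way from D^-1 = diag(T(bstar), T(b)). The rows
   of D used by A are the beta-numbers nu_i + q - i and mu_i + p - i; their
   complements q - 1 + j - nu'_j and p - 1 + j - mu'_j give the rows of B. Listing
   each block as "beta-numbers, then complement" is a permutation of sign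
   (-1)^|nu|, resp. (-1)^|mu|, and this is the sign of det X. *)

From HB Require Import structures.
From mathcomp Require Import all_boot all_order all_algebra all_fingroup.
From mathcomp Require Import zify.
Set Implicit Arguments. Unset Strict Implicit. Unset Printing Implicit Defensive.
Import Order.TTheory GRing.Theory Num.Theory.

Lemma leq_foldr_maxn (la : seq nat) x : x \in la -> x <= foldr maxn 0 la.
Proof.
elim: la => //= y la IH; rewrite in_cons => /predU1P[->|/IH]; first exact: leq_maxl.
by move/leq_trans; apply; apply: leq_maxr.
Qed.

Lemma nth_leq_foldr_maxn (la : seq nat) k : nth 0 la k <= foldr maxn 0 la.
Proof.
by case: (ltnP k (size la)) => [/(mem_nth 0)/leq_foldr_maxn | /(nth_default 0)->].
Qed.

Lemma size_conj_part la : size (conj_part la) = foldr maxn 0 la.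
Proof. exact: size_mkseq. Qed.

Lemma nth_conj_part la j : nth 0 (conj_part la) j = count (fun x => j < x) la.
Proof.
have [lt_j|le_j] := ltnP j (foldr maxn 0 la); first by rewrite nth_mkseq.
rewrite nth_default ?size_conj_part //; apply/esym/eqP; rewrite -leqn0 leqNgt -has_count.
by apply/hasP => -[x /leq_foldr_maxn le_x]; rewrite ltnNge (leq_trans le_x le_j).
Qed.

(* The beta-numbers [la_i + l - i] (listed from [i = l] down to [i = 1]),
   followed by the complementary numbers [l - 1 + j - la'_j], [j >= 1]. *)
Definition beta_shuffle (la : seq nat) (l L : nat) : nat :=
  if L < l then nth 0 la (l - 1 - L) + L else L - count (fun x => L - l < x) la.

Lemma beta_shuffle_max la l : beta_shuffle la l.+1 l = head 0 la + l.
Proof. by rewrite /beta_shuffle ltnSn subSS subn0 subnn nth0 addnC. Qed.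

Lemma beta_shuffle_bump la l k : sorted geq la ->
  beta_shuffle la l.+1 (bump l k) = bump (head 0 la + l) (beta_shuffle (behead la) l k).
Proof.
move=> la_sorted; have head_max i : nth 0 (behead la) i <= head 0 la.
  case: la la_sorted => [|x s /= /(order_path_min (rev_trans leq_trans))/allP le_x].
    by rewrite nth_nil.
  by case: (ltnP i (size s)) => [/(mem_nth 0)/le_x | /(nth_default 0)->].
rewrite /beta_shuffle /bump; case: (ltnP k l) => [lt_kl | le_lk].
  rewrite add0n ltnS (ltnW lt_kl).
  have -> : l.+1 - 1 - k = (l - 1 - k).+1 by lia.
  by rewrite -nth_behead; have := head_max (l - 1 - k); case: leqP; lia.
rewrite add1n ltnS ltnNge le_lk /= subSS.
have -> : count (fun x => k - l < x) la =
          (k - l < head 0 la) + count (fun x => k - l < x) (behead la).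
  by case: la la_sorted {head_max}.
case: (ltnP (k - l) (head 0 la)) => [lt_head | le_head]; first by case: leqP; lia.
suff -> : count (fun x => k - l < x) (behead la) = 0 by case: leqP; lia.
apply/eqP; rewrite -leqn0 leqNgt -has_count; apply/hasP => -[y y_in].
by rewrite -(nth_index 0 y_in) ltnNge (leq_trans (head_max _) le_head).
Qed.

Lemma beta_shuffle_perm (la : seq nat) l w : sorted geq la -> size la <= l ->
    all (fun x => x <= w) la ->
  exists s : 'S_(l + w),
    (forall i, val (s i) = beta_shuffle la l i) /\ odd_perm s = odd (sumn la).
Proof.
elim: l la => [|l IH] la la_sorted size_la la_w.
  move: size_la; rewrite leqn0 => /nilP ->; exists 1%g.
  by split=> [i|]; rewrite ?odd_perm1 // perm1 /beta_shuffle subn0.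
have [head_w behead_w] : head 0 la <= w /\ all (fun x => x <= w) (behead la).
  by case: (la) la_w => //= x s /andP.
have behead_sorted : sorted geq (behead la) by case: (la) la_sorted => //= x s /path_sorted.
have size_behead_la : size (behead la) <= l by rewrite size_behead; lia.
have [s [sE odd_s]] := IH _ behead_sorted size_behead_la behead_w.
have lt_l : l < (l + w).+1 by lia.
have lt_head : head 0 la + l < (l + w).+1 by lia.
exists (lift_perm (Ordinal lt_l) (Ordinal lt_head) s); split => [i|].
  case: (unliftP (Ordinal lt_l) i) => [k ->|->].
    by rewrite lift_perm_lift /= sE beta_shuffle_bump.
  by rewrite lift_perm_id /= beta_shuffle_max.
rewrite odd_lift_perm /= odd_s oddD.
by case: (la) => [|x t]; rewrite /= ?oddD; do 2?case: odd.
Qed.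

Section DirectSumPerm.

Variables m n : nat.

Definition dsum_perm_fun (s : 'S_m) (t : 'S_n) (i : 'I_(m + n)) : 'I_(m + n) :=
  match split i with inl x => lshift n (s x) | inr y => rshift m (t y) end.

Lemma dsum_perm_fun_inj s t : injective (dsum_perm_fun s t).
Proof.
move=> i j; rewrite /dsum_perm_fun.
case: splitP => x ix; case: splitP => y jy; move/(congr1 val) => /= eq_ij;
  apply: val_inj; rewrite /= ix jy.
- by move/val_inj/perm_inj: eq_ij => ->.
- by have := ltn_ord (s x); lia.
- by have := ltn_ord (s y); lia.
- by move/addnI/val_inj/perm_inj: eq_ij => ->.
Qed.

Definition dsum_perm s t : 'S_(m + n) := perm (@dsum_perm_fun_inj s t).

Lemma dsum_perm_lshift s t x : dsum_perm s t (lshift n x) = lshift n (s x).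
Proof. by rewrite permE /dsum_perm_fun (unsplitK (inl _ x)). Qed.

Lemma dsum_perm_rshift s t y : dsum_perm s t (rshift m y) = rshift m (t y).
Proof. by rewrite permE /dsum_perm_fun (unsplitK (inr _ y)). Qed.

Lemma perm_mx_dsum (R : pzRingType) s t :
  perm_mx (dsum_perm s t) = block_mx (perm_mx s) 0 0 (perm_mx t) :> 'M[R]_(m + n).
Proof.
apply/matrixP => i j; rewrite -[i]splitK -[j]splitK.
by case: (split i) => x; case: (split j) => y;
  rewrite ?(block_mxEul, block_mxEur, block_mxEdl, block_mxEdr) !mxE
          ?(dsum_perm_lshift, dsum_perm_rshift) ?eq_lrshift ?eq_rlshift
          ?(inj_eq (@lshift_inj _ _)) ?(inj_eq (@rshift_inj _ _)).
Qed.

Lemma odd_dsum_perm s t : odd_perm (dsum_perm s t) = odd_perm s (+) odd_perm t.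
Proof.
apply: (@signr_inj int); rewrite signr_addb -!(det_perm int) perm_mx_dsum.
exact: det_ublock.
Qed.

End DirectSumPerm.

Lemma odd_cast_perm m n (eq_mn : m = n) (s : 'S_m) : odd_perm (cast_perm eq_mn s) = odd_perm s.
Proof. by case: n / eq_mn; rewrite cast_perm_id. Qed.

Local Open Scope ring_scope.

Lemma series_inverse_conv (R : comPzRingType) (a b : int -> R) N x y :
    normalized_seq a -> normalized_seq b -> series_inverse a b ->
    (x < N)%N -> (y < N)%N ->
  \sum_(L < N) a (x%:Z - L%:Z) * b (L%:Z - y%:Z) = (x == y)%:R.
Proof.
move=> [_ a_neg] [_ b_neg] ab x_lt y_lt.
have vanish L : (L < y)%N || (x < L)%N -> a (x%:Z - L%:Z) * b (L%:Z - y%:Z) = 0.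
  by case/orP => ?; [rewrite b_neg ?mulr0 | rewrite a_neg ?mul0r] => //; lia.
rewrite -(big_mkord xpredT (fun L => a (x%:Z - L%:Z) * b (L%:Z - y%:Z))).
have [lt_xy | le_yx] := ltnP x y.
  rewrite (ltn_eqF lt_xy) big1 // => L _; apply: vanish.
  by case: (ltnP L y) => //; lia.
rewrite (big_cat_nat (n := y)) 1?(big_cat_nat (m := y) (n := x.+1)) //=; try lia.
rewrite [X in X + _]big1_seq => [|L]; last by rewrite mem_index_iota => ?; apply: vanish; lia.
rewrite [X in _ + (_ + X)]big1_seq => [|L]; last first.
  by rewrite mem_index_iota => ?; apply: vanish; lia.
rewrite add0r addr0 (big_addn 0 x.+1 y) big_mkord subSn //.
have -> : (x == y) = (x - y == 0)%N by apply/eqP/eqP; lia.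
rewrite -ab (reindex_inj rev_ord_inj); apply: eq_bigr => k _ /=.
by have := ltn_ord k => lt_k; congr (a _ * b _); lia.
Qed.

Lemma sum_mul_eqn (R : pzSemiRingType) N (F : nat -> R) e : (e < N)%N ->
  \sum_(k < N) F k * (k == e :> nat)%:R = F e.
Proof.
move=> lt_e; rewrite (bigD1 (Ordinal lt_e)) //= eqxx mulr1 big1 ?addr0 // => k.
by rewrite -val_eqE /= => /negbTE->; rewrite mulr0.
Qed.

Lemma det_ulsubmx_inverse (R : comPzRingType) n m (X Y : 'M[R]_(n + m)) :
  X *m Y = 1%:M -> \det (ulsubmx X) = \det X * \det (drsubmx Y).
Proof.
move=> XY; have : X *m Y = block_mx 1%:M 0 0 1%:M by rewrite XY scalar_mx_block.
rewrite -[X in X *m _]submxK -[Y in _ *m Y]submxK mulmx_block.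
case/eq_block_mx => _ XYur _ XYdr.
have : X *m block_mx 1%:M (ursubmx Y) 0 (drsubmx Y) = block_mx (ulsubmx X) 0 (dlsubmx X) 1%:M.
  by rewrite -[X in X *m _]submxK mulmx_block !mulmx1 !mulmx0 !addr0 XYur XYdr.
move/(congr1 determinant); rewrite det_mulmx det_lblock det_ublock !det1 mulr1 mul1r.
by move=> <-.
Qed.

Section BiToeplitz.

Variable R : comPzRingType.

Definition bitoeplitz (c d : int -> R) (m x y : nat) : R :=
  if (x < m)%N then (if (y < m)%N then c (x%:Z - y%:Z) else 0)
  else (if (y < m)%N then 0 else d (x%:Z - y%:Z)).

Definition bitoeplitz_mx c d m n : 'M[R]_n := \matrix_(i, j) bitoeplitz c d m i j.

Variables (c c' d d' : int -> R).
Hypotheses (c_norm : normalized_seq c) (c'_norm : normalized_seq c').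
Hypotheses (d_norm : normalized_seq d) (d'_norm : normalized_seq d').

Lemma bitoeplitz_mx_inverse m n : series_inverse c c' -> series_inverse d d' ->
  bitoeplitz_mx c d m n *m bitoeplitz_mx c' d' m n = 1%:M.
Proof.
move=> cc' dd'; apply/matrixP => i j; rewrite !mxE.
under eq_bigr do rewrite !mxE.
have [lt_i lt_j] := (ltn_ord i, ltn_ord j).
rewrite /bitoeplitz; case: (ltnP i m) => im; case: (ltnP j m) => jm.
2,3: rewrite big1 => [|L _]; last by case: ifP; rewrite ?mulr0 ?mul0r.
2,3: suff /negbTE-> : i != j by []; by apply/eqP => /(congr1 val) /=; lia.
- rewrite -(series_inverse_conv c_norm c'_norm cc' lt_i lt_j); apply: eq_bigr => L _.
  by case: ifP => // Lm; rewrite (proj2 c_norm) ?mul0r //; lia.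
- rewrite -(series_inverse_conv d_norm d'_norm dd' lt_i lt_j); apply: eq_bigr => L _.
  by case: ifP => // Lm; rewrite (proj2 d'_norm) ?mulr0 //; lia.
Qed.

Lemma det_bitoeplitz_mx m n : \det (bitoeplitz_mx c d m n) = 1.
Proof.
rewrite det_trig; last first.
  apply/is_trig_mxP => i j lt_ij; rewrite mxE /bitoeplitz.
  by do 2!case: ifP => //; rewrite ?(proj2 c_norm) ?(proj2 d_norm) //; lia.
rewrite big1 // => i _; rewrite mxE /bitoeplitz subrr.
by case: (i < m)%N; [case: c_norm | case: d_norm].
Qed.

End BiToeplitz.

Local Close Scope ring_scope.

Section DualJacobiTrudi.

Variables nu mu : seq nat.

Local Notation q := (size nu).
Local Notation p := (size mu).
Local Notation s := (size (conj_part nu)).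
Local Notation r := (size (conj_part mu)).
Local Notation N := (q + p + (s + r)).

(* Positions [j < q + p] index the columns of [A], the others the remaining
   columns of [D]; [col_of j] is the column of [D] placed at position [j]. *)
Definition col_of (j : nat) : nat :=
  if j < q then j
  else if j < q + p then q + s + (p + q - 1 - j)
  else if j < q + p + s then q + s - 1 - (j - (q + p))
  else q + s + (p + (j - (q + p) - s)).

Lemma col_of_lt j : j < N -> col_of j < N.
Proof. by rewrite /col_of; repeat case: ifP; lia. Qed.

Lemma col_of_inj j k : j < N -> k < N -> col_of j = col_of k -> j = k.
Proof. by rewrite /col_of; repeat case: ifP; lia. Qed.

Definition col_ord (j : 'I_N) : 'I_N := Ordinal (col_of_lt (ltn_ord j)).

Lemma col_ord_inj : injective col_ord.
Proof. by move=> j k /(congr1 val) /= /col_of_inj eq_jk; apply/val_inj/eq_jk. Qed.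

Definition rho : 'S_N := perm col_ord_inj.

Lemma rhoE j : val (rho j) = col_of j.
Proof. by rewrite permE. Qed.

Definition block_shuffle (L : nat) : nat :=
  if L < q + s then beta_shuffle nu q L else q + s + beta_shuffle mu p (L - (q + s)).

Lemma block_shuffle_perm : sorted geq nu -> sorted geq mu ->
  exists tau : 'S_N,
    (forall L : 'I_N, val (tau L) = block_shuffle L) /\ odd_perm tau = odd (sumn nu + sumn mu).
Proof.
move=> nu_sorted mu_sorted.
have parts_le la : all (fun x => x <= size (conj_part la)) la.
  by apply/allP => x; rewrite size_conj_part; apply: leq_foldr_maxn.
have [sv [svE odd_sv]] := beta_shuffle_perm nu_sorted (leqnn q) (parts_le nu).
have [sm [smE odd_sm]] := beta_shuffle_perm mu_sorted (leqnn p) (parts_le mu).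
have eqN : q + s + (p + r) = N by lia.
exists (cast_perm eqN (dsum_perm sv sm)); split => [L|]; last first.
  by rewrite odd_cast_perm odd_dsum_perm odd_sv odd_sm oddD.
rewrite cast_permE /= permE /dsum_perm_fun /block_shuffle.
case: splitP => [x | y] /= ->; first by rewrite svE ltn_ord.
by rewrite smE ifN ?addKn //; lia.
Qed.

Definition row_of (i : nat) : nat := block_shuffle (col_of i).

(* Column [j] of [A] is column [col_of j] of [D] plus, when [has_partner j],
   column [col_of (partner j)]; partners are complementary positions. *)
Definition has_partner (j : nat) : bool :=
  ((j < q) && (q - 1 - j < r)) || [&& q <= j, j < q + p & j < q + s].

Definition partner (j : nat) : nat :=
  if j < q then q + p + s + (q - 1 - j) else q + p + (q + s - 1 - j).

Definition has_copartner (k : nat) : bool :=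
  [&& q + p <= k, k < q + p + s & q + s - 1 - (k - (q + p)) < q + p]
  || ((q + p + s <= k) && (k - (q + p) - s < q)).

Definition copartner (k : nat) : nat :=
  if k < q + p + s then q + s - 1 - (k - (q + p)) else q - 1 - (k - (q + p) - s).

Lemma partner_nu j : j < q -> partner j = q + p + s + (q - 1 - j).
Proof. by rewrite /partner => ->. Qed.

Lemma partner_mu j : q <= j -> partner j = q + p + (q + s - 1 - j).
Proof. by rewrite /partner ltnNge => ->. Qed.

Lemma has_partner_nu j : j < q -> has_partner j = (q - 1 - j < r).
Proof. by rewrite /has_partner => lt_jq; apply/idP/idP; lia. Qed.

Lemma has_partner_mu j : q <= j < q + p -> has_partner j = (j < q + s).
Proof. by rewrite /has_partner => j_mu; apply/idP/idP; lia. Qed.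

Lemma has_copartner_nu' t : t < s -> has_copartner (q + p + t) = (q + s - 1 - t < q + p).
Proof. by rewrite /has_copartner => lt_ts; apply/idP/idP; lia. Qed.

Lemma copartner_nu' t : t < s -> copartner (q + p + t) = q + s - 1 - t.
Proof. by rewrite /copartner => lt_ts; rewrite ifT ?addKn //; lia. Qed.

Lemma has_copartner_mu' t : has_copartner (q + p + s + t) = (t < q).
Proof. by rewrite /has_copartner; apply/idP/idP; lia. Qed.

Lemma copartner_mu' t : copartner (q + p + s + t) = q - 1 - t.
Proof. by rewrite /copartner ifN; [congr (_ - _); lia | lia]. Qed.

Lemma partner_lt j : has_partner j -> q + p <= partner j < N.
Proof. by rewrite /has_partner /partner; case: ifP; lia. Qed.

Lemma copartner_lt k : k < N -> has_copartner k -> copartner k < N.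
Proof. by rewrite /has_copartner /copartner; case: ifP; lia. Qed.

Lemma partnerE k j : k < N -> j < N ->
  (has_partner j && (k == partner j)) = (has_copartner k && (j == copartner k)).
Proof.
rewrite /has_partner /partner /has_copartner /copartner.
by case: ifP => ?; case: ifP => ? ? ?; apply/idP/idP; lia.
Qed.

Lemma col_of_nu j : j < q -> col_of j = j.
Proof. by rewrite /col_of => ->. Qed.

Lemma col_of_mu j : q <= j < q + p -> col_of j = q + s + (p + q - 1 - j).
Proof. by rewrite /col_of => /andP[le_qj ->]; rewrite ltnNge le_qj. Qed.

Lemma col_of_nu' t : t < s -> col_of (q + p + t) = q + s - 1 - t.
Proof. by rewrite /col_of; repeat case: ifP; lia. Qed.

Lemma col_of_mu' t : col_of (q + p + s + t) = q + s + (p + t).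
Proof. by rewrite /col_of; repeat case: ifP; lia. Qed.

Lemma row_of_nu i : i < q -> row_of i = nth 0 nu (q - 1 - i) + i.
Proof.
by move=> lt_iq; rewrite /row_of col_of_nu // /block_shuffle /beta_shuffle lt_iq ltn_addr.
Qed.

Lemma row_of_mu i : q <= i < q + p ->
  row_of i = q + s + (nth 0 mu (i - q) + (p + q - 1 - i)).
Proof.
move=> i_mu; rewrite /row_of col_of_mu // /block_shuffle ifN; last by lia.
rewrite addKn /beta_shuffle ifT; last by lia.
by congr (_ + (nth _ _ _ + _)); lia.
Qed.

Lemma row_of_nu' u : u < s ->
  row_of (q + p + u) = q + s - 1 - u - count (fun x => s - 1 - u < x) nu.
Proof.
move=> lt_us; rewrite /row_of col_of_nu' // /block_shuffle ifT; last by lia.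
rewrite /beta_shuffle ifN; last by lia.
by have -> : q + s - 1 - u - q = s - 1 - u by lia.
Qed.

Lemma row_of_mu' u : u < r ->
  row_of (q + p + s + u) = q + s + (p + u - count (fun x => u < x) mu).
Proof.
move=> lt_ur; rewrite /row_of col_of_mu' /block_shuffle ifN; last by lia.
by rewrite addKn /beta_shuffle ifN ?addKn //; lia.
Qed.

Lemma nth_nu_le k : nth 0 nu k <= s.
Proof. by rewrite size_conj_part nth_leq_foldr_maxn. Qed.

Lemma nth_mu_le k : nth 0 mu k <= r.
Proof. by rewrite size_conj_part nth_leq_foldr_maxn. Qed.

Local Open Scope ring_scope.

Variable R : comPzRingType.

Definition partner_mx : 'M[R]_N := \matrix_(k, j) (has_partner j && (k == partner j :> nat))%:R.

Lemma partner_mx2 : partner_mx *m partner_mx = 0.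
Proof.
apply/matrixP => k j; rewrite !mxE big1 // => l _; rewrite !mxE.
case: (has_partner j && _) / andP => [[pj /eqP lj]|]; last by rewrite mulr0.
have /andP[le_l _] := partner_lt pj; rewrite -lj in le_l.
suff -> : has_partner l = false by rewrite mul0r.
by apply/negbTE; move: le_l; rewrite /has_partner; lia.
Qed.

Lemma det_partner_mx : \det (1%:M + partner_mx) = 1.
Proof.
have partner_gt j : has_partner j -> (j < partner j)%N.
  by rewrite /has_partner /partner; case: ifP; lia.
rewrite det_trig; last first.
  apply/is_trig_mxP => i j lt_ij; rewrite !mxE -val_eqE /= (ltn_eqF lt_ij) add0r.
  case: (has_partner j) / idP => [/partner_gt pj | //].
  by rewrite /= (ltn_eqF (ltn_trans lt_ij pj)).
rewrite big1 // => i _; rewrite !mxE eqxx.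
case: (has_partner i) / idP => [/partner_gt pi | _]; last by rewrite addr0.
by rewrite /= (ltn_eqF pi) addr0.
Qed.

Variables (a astar b bstar : int -> R).
Hypotheses (a_norm : normalized_seq a) (astar_norm : normalized_seq astar).
Hypotheses (b_norm : normalized_seq b) (bstar_norm : normalized_seq bstar).
Hypotheses (ab : series_inverse a b) (ab_star : series_inverse astar bstar).

Local Notation D := (bitoeplitz_mx astar a (q + s) N).
Local Notation Dinv := (bitoeplitz_mx bstar b (q + s) N).

Variable tau : 'S_N.
Hypothesis tauE : forall L : 'I_N, val (tau L) = block_shuffle L.

Definition X : 'M[R]_N := perm_mx rho *m perm_mx tau *m D *m perm_mx rho^-1 *m (1%:M + partner_mx).
Definition Y : 'M[R]_N := (1%:M - partner_mx) *m perm_mx rho *m Dinv *m perm_mx tau^-1 *m perm_mx rho^-1.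

Lemma mulmx_XY : X *m Y = 1%:M.
Proof.
have permK (g : 'S_N) (M : 'M[R]_N) : M *m perm_mx g *m perm_mx g^-1 = M.
  by rewrite -mulmxA -perm_mxM mulgV perm_mx1 mulmx1.
have permVK (g : 'S_N) (M : 'M[R]_N) : M *m perm_mx g^-1 *m perm_mx g = M.
  by rewrite -mulmxA -perm_mxM mulVg perm_mx1 mulmx1.
have unipotentK (M : 'M[R]_N) : M *m (1%:M + partner_mx) *m (1%:M - partner_mx) = M.
  by rewrite -mulmxA mulmxDl !mulmxBr !mul1mx mulmx1 partner_mx2 subr0 subrK mulmx1.
have DK (M : 'M[R]_N) : M *m D *m Dinv = M.
  by rewrite -mulmxA bitoeplitz_mx_inverse // mulmx1.
by rewrite /X /Y !mulmxA unipotentK permVK DK permK -perm_mxM mulgV perm_mx1.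
Qed.

Lemma det_X : \det X = (-1) ^+ tau.
Proof.
rewrite /X !det_mulmx det_bitoeplitz_mx // det_partner_mx !det_perm odd_permV.
by rewrite !mulr1 mulrAC -expr2 sqrr_sign mul1r.
Qed.

Local Notation D_entry := (bitoeplitz astar a (q + s)).
Local Notation Dinv_entry := (bitoeplitz bstar b (q + s)).

Lemma XE (i j : 'I_N) : X i j = D_entry (row_of i) (col_of j)
  + (if has_partner j then D_entry (row_of i) (col_of (partner j)) else 0).
Proof.
set M := perm_mx rho *m perm_mx tau *m D *m perm_mx rho^-1.
have ME (k : 'I_N) : M i k = D_entry (row_of i) (col_of k).
  rewrite /M -perm_mxM -row_permE -[rho in perm_mx rho^-1]invgK -col_permE.
  by rewrite !mxE permM tauE rhoE invgK rhoE.
rewrite /X -/M mulmxDr mulmx1 mxE ME; congr (_ + _).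
rewrite mxE; under eq_bigr do rewrite ME mxE.
case: (has_partner j) / idP => [pj | _]; last by rewrite big1 // => k _; rewrite mulr0.
have /andP[_ lt_pj] := partner_lt pj.
by rewrite -(sum_mul_eqn (fun k => D_entry (row_of i) (col_of k)) lt_pj).
Qed.

Lemma YE (k i : 'I_N) : Y k i = Dinv_entry (col_of k) (row_of i)
  - (if has_copartner k then Dinv_entry (col_of (copartner k)) (row_of i) else 0).
Proof.
set V := perm_mx rho *m Dinv *m perm_mx tau^-1 *m perm_mx rho^-1.
have VE (l : 'I_N) : V l i = Dinv_entry (col_of l) (row_of i).
  rewrite /V -mulmxA -perm_mxM -invMg -col_permE -row_permE.
  by rewrite !mxE permM tauE !rhoE.
have -> : Y = (1%:M - partner_mx) *m V by rewrite /Y /V !mulmxA.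
rewrite mulmxBl mul1mx mxE VE mxE; congr (_ - _).
rewrite mxE; under eq_bigr do rewrite VE mxE partnerE ?ltn_ord // mulrC.
case: (has_copartner k) / idP => [ck | _]; last by rewrite big1 // => l _; rewrite mulr0.
by rewrite -(sum_mul_eqn (fun l => Dinv_entry (col_of l) (row_of i)) (copartner_lt (ltn_ord k) ck)).
Qed.

Ltac case_ifs := repeat match goal with |- context[if ?c then _ else _] =>
  lazymatch c with context[if _ then _ else _] => fail | _ => case: (boolP c) => ? end end.

(* Each branch has contradictory index ranges, equal indices, or a negative index. *)
Ltac entry_eq :=
  rewrite ?(addr0, add0r, subr0, sub0r, mul1r, mulr1, mulN1r, mulrN1, opprK, oppr0);
  first [ by exfalso; lia | done
    | match goal with |- (- ?f _ = - ?f _) => by congr (- f _); lia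
                    | |- (?f _ = ?f _) => by congr (f _); lia end
    | by rewrite (proj2 a_norm) ?oppr0 //; lia | by rewrite (proj2 astar_norm) ?oppr0 //; lia
    | by rewrite (proj2 b_norm) ?oppr0 //; lia | by rewrite (proj2 bstar_norm) ?oppr0 //; lia ].

Lemma ulsubmx_X : ulsubmx X = jt_matrix astar a nu mu.
Proof.
apply/matrixP => i j; rewrite ulsubmxEsub mxE XE mxE /=.
have [lt_i lt_j] := (ltn_ord i, ltn_ord j).
have := nth_nu_le (q - 1 - i); have := nth_mu_le (i - q) => ? ?.
have -> : row_of i = if (i < q)%N then (nth 0 nu (q - 1 - i) + i)%N
                     else (q + s + (nth 0 mu (i - q) + (p + q - 1 - i)))%N.
  by case: ifP => lt_iq; [rewrite row_of_nu | rewrite row_of_mu //; lia].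
case: (ltnP j q) => [lt_jq | le_qj].
  rewrite has_partner_nu // col_of_nu // partner_nu // col_of_mu'.
  by rewrite /bitoeplitz; case_ifs; entry_eq.
rewrite has_partner_mu ?le_qj // col_of_mu ?le_qj // partner_mu //.
case: (ltnP j (q + s)) => [lt_jqs | ge_jqs]; last by rewrite /bitoeplitz; case_ifs; entry_eq.
rewrite col_of_nu'; last by lia.
by rewrite /bitoeplitz; case_ifs; entry_eq.
Qed.

Definition sign_row : 'rV[R]_(s + r) := \row_(t < s + r) if (t < s)%N then 1 else -1.

Lemma drsubmx_Y : drsubmx Y =
  diag_mx sign_row *m (jt_matrix bstar b (conj_part nu) (conj_part mu))^T *m diag_mx sign_row.
Proof.
apply/matrixP => t u; rewrite drsubmxEsub mxE YE /=.
rewrite mul_mx_diag mul_diag_mx !mxE !nth_conj_part.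
have [lt_t lt_u] := (ltn_ord t, ltn_ord u).
have := count_size (fun x => s - 1 - u < x)%N nu.
have := count_size (fun x => u - s < x)%N mu => ? ?.
have -> : row_of (q + p + u) = if (u < s)%N
    then (q + s - 1 - u - count (fun x => s - 1 - u < x) nu)%N
    else (q + s + (p + (u - s) - count (fun x => u - s < x) mu))%N.
  case: ifP => lt_us; first by rewrite row_of_nu'.
  by rewrite (_ : q + p + u = q + p + s + (u - s))%N ?row_of_mu' //; lia.
case: (ltnP t s) => [lt_ts | le_st].
  rewrite col_of_nu' // has_copartner_nu' // copartner_nu' //.
  case: (ltnP (q + s - 1 - t) (q + p)) => [lt_co | ge_co]; last first.
    by rewrite /bitoeplitz; case_ifs; entry_eq.
  rewrite col_of_mu; last by lia.
  by rewrite /bitoeplitz; case_ifs; entry_eq.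
rewrite (_ : q + p + t = q + p + s + (t - s))%N; last by lia.
rewrite col_of_mu' has_copartner_mu' copartner_mu'.
case: (ltnP (t - s) q) => [lt_co | ge_co]; last by rewrite /bitoeplitz; case_ifs; entry_eq.
rewrite col_of_nu; last by lia.
by rewrite /bitoeplitz; case_ifs; entry_eq.
Qed.

Lemma det_jt_matrix_dual : \det (jt_matrix astar a nu mu) =
  (-1) ^+ tau * \det (jt_matrix bstar b (conj_part nu) (conj_part mu)).
Proof.
have sign_row2 : \det (diag_mx sign_row) ^+ 2 = 1.
  rewrite det_diag -prodrXl big1 // => t _; rewrite mxE.
  by case: ifP; rewrite ?sqrrN expr1n.
rewrite -ulsubmx_X (det_ulsubmx_inverse mulmx_XY) det_X drsubmx_Y.
by rewrite !det_mulmx det_tr mulrAC -expr2 sign_row2 mul1r.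
Qed.

End DualJacobiTrudi.

Local Open Scope ring_scope.

Theorem mainTheorem19 (R : comPzRingType) (a astar b bstar : int -> R)
  (nu mu : seq nat) :
  normalized_seq a -> normalized_seq astar ->
  normalized_seq b -> normalized_seq bstar ->
  series_inverse a b -> series_inverse astar bstar ->
  is_partition nu -> is_partition mu ->
  \det (jt_matrix astar a nu mu) =
  (-1) ^+ (sumn nu + sumn mu) *
  \det (jt_matrix bstar b (conj_part nu) (conj_part mu)).
Proof.
move=> a_norm astar_norm b_norm bstar_norm ab ab_star /andP[nu_sorted _] /andP[mu_sorted _].
have [tau [tauE odd_tau]] := block_shuffle_perm nu_sorted mu_sorted.
rewrite (det_jt_matrix_dual a_norm astar_norm b_norm bstar_norm ab ab_star tauE).
by rewrite -[(-1) ^+ (_ + _)]signr_odd odd_tau.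
Qed.
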